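(* Assume $|M|\ge 2$. Let $(T_{opt},B_{opt})$ be an optimal solution of an instance of MEMTCS and let $T_I$ be a minimum isotropic scattering tree for $M$. Then $\sum_{u\in nl(T_{opt})}|B_{opt}(u)|\ \ge\ \Xi(T_I)-|d^+(T_{opt})|+1$.
   Context: Let $G=(V,E)$ be a finite, simple, undirected, connected graph with $|V|\ge 2$. Fix a positive integer $K$ and, for every $u\in V$, a nonempty set $\Gamma(u)\subseteq\{1,\dots,K\}$. For a tree $T$, $N(T)$ is its vertex set, $nb_T(u)$ the neighbours of $u$ in $T$, and $d^+(T)$ the set of vertices of degree greater than one in $T$; if $T$ is rooted, $nl(T)$ is its set of non-leaf vertices and $child(u,T)$ the set of children of $u$. A hitting set of a collection $\mathcal C$ of subsets of a finite set $\mathcal F$ is a subset of $\mathcal F$ meeting every member of $\mathcal C$. For a tree $T$ in $G$ and $u\in d^+(T)$, let $\Upsilon(u,T)$ be a minimum-cardinality hitting set of $\{\Gamma(v): v\in nb_T(u)\}$, and let $\Xi(T)=\sum_{u\in d^+(T)}|\Upsilon(u,T)|$. A minimum isotropic scattering tree $T_I$ for $M$ is a tree in $G$ with $M\subseteq N(T_I)$ minimizing $\Xi$ among all such trees. An instance of MEMTCS consists of $G,K,\Gamma$, a terminal set $M\subseteq V$, a source $s\in M$, and reals $e_s\ge e_r\ge 0$. A multicast tree is a subtree $T$ of $G$ with $M\subseteq N(T)$, rooted at $s$. A feasible schedule for $T$ is a function $B: nl(T)\to 2^{\{1,\dots,K\}}$ such that each $B(u)$ is a hitting set of $\{\Gamma(v):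 v\in child(u,T)\}$. Its cost is $\Pi(T,B)=\sum_{u\in nl(T)}|B(u)|\,e_s+(|N(T)|-1)\,e_r$. An optimal solution $(T_{opt},B_{opt})$ minimizes $\Pi$ over all pairs of a multicast tree and a feasible schedule for it. *)

From HB Require Import structures.
From mathcomp Require Import all_boot all_order all_algebra.
Set Implicit Arguments. Unset Strict Implicit. Unset Printing Implicit Defensive.
Import Order.TTheory GRing.Theory Num.Theory.

Section Defs.
Variable V : finType.

Definition simple_graph (E : rel V) := symmetric E /\ irreflexive E.
Definition graph_connected (E : rel V) := forall u v : V, connect E u v.

(* A subgraph given by a vertex set N and a set F of (unordered) edges {u,v}. *)
Definition adjF (F : {set {set V}}) : rel V := fun u v => [set u; v] \in F.

Definition is_tree (E : rel V) (N : {set V}) (F : {set {set V}}) : Prop :=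
  [/\ (forall f, f \in F -> exists u v, [/\ f = [set u; v], u != v, E u v,
                                          u \in N & v \in N]),
      N != set0,
      (forall u v, u \in N -> v \in N -> connect (adjF F) u v)
    & #|F| = (#|N| - 1)%N].

Definition nbT (F : {set {set V}}) (u : V) : {set V} := [set v | adjF F u v].
Definition dplus (N : {set V}) (F : {set {set V}}) : {set V} :=
  [set u in N | 1 < #|nbT F u|]%N.

(* Rooted at s: v is a child of u iff {u,v} is an edge whose removal
   separates v from the root s. *)
Definition childT (s : V) (F : {set {set V}}) (u : V) : {set V} :=
  [set v | adjF F u v && ~~ connect (adjF (F :\ [set u; v])) s v].
Definition nlT (s : V) (N : {set V}) (F : {set {set V}}) : {set V} :=
  [set u in N | childT s F u != set0].

Variable K : nat.
Variable Gamma : V -> {set 'I_K}.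

Definition hits (B : {set 'I_K}) (S : {set V}) : bool :=
  [forall v in S, B :&: Gamma v != set0].

Definition min_hit (S : {set V}) : nat :=
  #| [arg min_(B < setT | hits B S) #|B| ] |.

Definition Xi (N : {set V}) (F : {set {set V}}) : nat :=
  (\sum_(u in dplus N F) min_hit (nbT F u))%N.

Definition feasible (s : V) (N : {set V}) (F : {set {set V}})
  (B : V -> {set 'I_K}) : Prop :=
  forall u, u \in nlT s N F -> hits (B u) (childT s F u).

Definition cost (R : realFieldType) (es er : R) (s : V) (N : {set V})
  (F : {set {set V}}) (B : V -> {set 'I_K}) : R :=
  ((\sum_(u in nlT s N F) #|B u|)%N)%:R * es + ((#|N| - 1)%N)%:R * er.

End Defs.

(* Root T_opt at s. A non-leaf u of T_opt has at most one neighbour that is not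
   a child (its parent), and the root has none. Adding one channel of the
   parent to B_opt(u) therefore gives a hitting set of all neighbours of u, so
   |Upsilon(u, T_opt)| <= |B_opt(u)| + [u <> s]. Every vertex of degree > 1 is
   a non-leaf, and the root is a non-leaf with |B_opt(s)| >= 1; summing over
   d^+(T_opt) gives Xi(T_opt) + 1 <= sum |B_opt(u)| + |d^+(T_opt)|, and
   Xi(T_I) <= Xi(T_opt) by minimality of T_I. *)
From HB Require Import structures.
From mathcomp Require Import all_boot all_order all_algebra.
Import Order.TTheory GRing.Theory Num.Theory.
Set Implicit Arguments. Unset Strict Implicit.

Section Trees.
Variable V : finType.
Implicit Types (E : rel V) (F : {set {set V}}) (N : {set V}).

Lemma adjF_sym F : symmetric (adjF F).
Proof. by move=> u v; rewrite /adjF setUC. Qed.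

Lemma connect_adjF_sym F : connect_sym (adjF F).
Proof. exact/sym_connect_sym/adjF_sym. Qed.

(* The second disjunct makes the predicate satisfiable for every x, so that
   the distance below can be defined by [ex_minn]. *)
Definition reach_in F r x n :=
  [exists p : n.-tuple V, path (adjF F) x p && (last x p == r)]
  || ~~ connect (adjF F) x r.

Lemma reach_in_exists F r x : exists n, reach_in F r x n.
Proof.
rewrite /reach_in; case: (boolP (connect _ x r)) => [/connectP[p xp ->]|_].
  by exists (size p); apply/orP; left; apply/existsP; exists (in_tuple p); rewrite xp eqxx.
by exists 0; rewrite orbT.
Qed.

Definition dist F r x := ex_minn (reach_in_exists F r x).

Lemma dist_step F r x : x != r -> connect (adjF F) x r ->
  exists y, adjF F x y && (dist F r y < dist F r x).
Proof.
move=> xr xCr; rewrite /dist; case: ex_minnP => n; rewrite /reach_in xCr orbF.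
case/existsP=> -[[|y p] sz_p] /andP[/= xp /eqP lastp] _.
  by rewrite lastp eqxx in xr.
case/andP: xp => xy yp; exists y; rewrite xy /=.
case: ex_minnP => m _ /(_ (size p)); rewrite -(eqP sz_p); apply.
by apply/orP; left; apply/existsP; exists (in_tuple p); rewrite yp lastp eqxx.
Qed.

(* Mapping every x <> r to an edge towards a neighbour closer to r is
   injective: two vertices sharing an edge cannot each be closer than the
   other. *)
Lemma card_connected_le F N r : r \in N ->
  (forall x, x \in N -> connect (adjF F) x r) -> #|N| <= #|F| + 1.
Proof.
move=> rN NCr.
pose g x := [set x; odflt x [pick y | adjF F x y && (dist F r y < dist F r x)]].
have gP x : x \in N :\ r ->
    g x \in F /\ exists2 y, g x = [set x; y] & dist F r y < dist F r x.
  case/setD1P=> xr xN; rewrite /g; case: pickP => [y /andP[xy lt_yx]|none] /=.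
    by split=> //; exists y.
  have [y /andP[xy lt_yx]] := dist_step xr (NCr x xN).
  by move: (none y); rewrite xy lt_yx.
have g_inj : {in N :\ r &, injective g}.
  move=> x x' /gP[_ [y -> lt_yx]] /gP[_ [y' -> lt_y'x']] exx'.
  apply/eqP; apply: contraT => neq_xx'.
  have /set2P[/eqP|xy'] : x \in [set x'; y'] by rewrite -exx' set21.
    by rewrite (negbTE neq_xx').
  have /set2P[/esym/eqP|x'y] : x' \in [set x; y] by rewrite exx' set21.
    by rewrite (negbTE neq_xx').
  by subst; move: (ltn_trans lt_yx lt_y'x'); rewrite ltnn.
have : #|g @: (N :\ r)| <= #|F|.
  by apply/subset_leq_card/subsetP => _ /imsetP[x xN ->]; case: (gP x xN).
by rewrite card_in_imset // (cardsD1 r N) rN add1n addn1.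
Qed.

Lemma connect_edge_removed F a b x : connect (adjF F) x a ->
  connect (adjF (F :\ [set a; b])) x a || connect (adjF (F :\ [set a; b])) x b.
Proof.
case/connectP=> p; elim: p x => [|z p IH] x /=.
  by move=> _ ->; rewrite connect0.
case/andP=> xz zp /(IH z zp).
have [exz _|nexz] := eqVneq [set x; z] [set a; b].
  have : x \in [set a; b] by rewrite -exz set21.
  by case/set2P=> ->; rewrite connect0 ?orbT.
have xz' : adjF (F :\ [set a; b]) x z by rewrite /adjF in_setD1 nexz.
by case/orP=> zC; apply/orP; [left|right]; apply: connect_trans (connect1 xz') zC.
Qed.

Lemma tree_edge_ends E N F a b : is_tree E N F -> [set a; b] \in F ->
  [/\ a != b, a \in N & b \in N].
Proof.
case=> edgesP _ _ _ /edgesP[u [v [eab uv _ uN vN]]].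
have : a \in [set u; v] by rewrite -eab set21.
have : b \in [set u; v] by rewrite -eab set22.
have ab : a != b.
  apply: contraNneq uv => eab'; move: eab; rewrite -eab' setUid => /setP eq_uv.
  by have := eq_uv u; have := eq_uv v; rewrite set21 set22 !in_set1 => /eqP-> /eqP->.
by rewrite ab => /set2P[]-> /set2P[]->.
Qed.

(* Otherwise the N vertices would stay connected by the #|N| - 2 remaining
   edges, contradicting [card_connected_le]. *)
Lemma tree_edge_bridge E N F a b : is_tree E N F -> [set a; b] \in F ->
  ~~ connect (adjF (F :\ [set a; b])) a b.
Proof.
move=> T eF; have [_ aN _] := tree_edge_ends T eF.
case: T => _ _ NC cardF; apply/negP => aCb.
have NCa x : x \in N -> connect (adjF (F :\ [set a; b])) x a.
  move=> xN; case/orP: (connect_edge_removed b (NC x a xN aN)) => // xCb.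
  by apply: connect_trans xCb _; rewrite connect_adjF_sym.
have := card_connected_le aN NCa; rewrite (cardsD1 [set a; b] F) eF in cardF.
by move=> /(leq_sub2r 1); rewrite addnK -cardF add1n ltnn.
Qed.

Lemma path_avoid_edge F (e1 e2 : {set V}) u x p :
  u \in e1 -> path (adjF (F :\ e2)) x p ->
  ~~ connect (adjF (F :\ e2)) u (last x p) -> path (adjF (F :\ e1)) x p.
Proof.
move=> ue1; elim: p x => [|z p IH] x //= /andP[xz zp] uNCl.
rewrite IH // andbT.
have xu : x != u.
  by apply: contraNneq uNCl => <-; apply/connectP; exists (z :: p) => //=; rewrite xz.
have zu : z != u by apply: contraNneq uNCl => <-; apply/connectP; exists p.
move: xz; rewrite /adjF !in_setD1 => /andP[_ ->]; rewrite andbT.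
apply: contraTneq ue1 => <-; rewrite in_set2 negb_or.
by rewrite eq_sym xu eq_sym zu.
Qed.

Variable s : V.

Lemma in_nonchild F u v : (v \in nbT F u :\: childT s F u) =
  adjF F u v && connect (adjF (F :\ [set u; v])) s v.
Proof. by rewrite !inE; case: (adjF F u v); rewrite /= ?negbK ?andbT. Qed.

(* The non-child neighbours of u are its parents: they reach s without the
   edge to u. Two of them would close a cycle through s. *)
Lemma card_nonchild_le1 E N F u : is_tree E N F ->
  #|nbT F u :\: childT s F u| <= 1.
Proof.
move=> T; apply/card_le1_eqP => v1 v2.
rewrite !in_nonchild => /andP[uv1 sCv1] /andP[uv2 sCv2].
case: (eqVneq v1 v2) => // v12.
have [uv2' _ _] := tree_edge_ends T uv2.
have sCv2' : connect (adjF (F :\ [set u; v1])) s v2.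
  case/connectP: sCv2 => p sp lastp; apply/connectP; exists p => //.
  apply: (path_avoid_edge (u := u)) sp _; first by rewrite set21.
  by rewrite -lastp; apply: tree_edge_bridge T uv2.
have uv2'' : adjF (F :\ [set u; v1]) u v2.
  rewrite /adjF in_setD1 (_ : [set u; v2] \in F) // andbT.
  apply: contraNneq v12 => /setP/(_ v2).
  by rewrite set22 in_set2 eq_sym (negbTE uv2') /= => /esym/eqP->.
case/negP: (tree_edge_bridge T uv1); apply: connect_trans (connect1 uv2'') _.
by apply: connect_trans _ sCv1; rewrite connect_adjF_sym.
Qed.

Lemma root_nbT_sub_childT E N F : is_tree E N F -> nbT F s \subset childT s F s.
Proof.
move=> T; apply/subsetP => v; rewrite !inE => sv.
by rewrite sv (tree_edge_bridge T sv).
Qed.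

Lemma root_has_nb E N F : is_tree E N F -> s \in N -> 2 <= #|N| ->
  exists v, adjF F s v.
Proof.
case=> _ _ NC _ sN /card_gt1P[x [y [xN yN xy]]].
have [x' [x'N sx']] : exists x', x' \in N /\ x' != s.
  by case: (eqVneq x s) => [exs|]; [exists y; rewrite -exs eq_sym | exists x].
case/connectP: (NC s x' sN x'N) => -[/= _ esx|v p /= /andP[sv _] _].
  by rewrite esx eqxx in sx'.
by exists v.
Qed.

Lemma nonchild_sub E N F u w : is_tree E N F -> w \in nbT F u :\: childT s F u ->
  nbT F u \subset w |: childT s F u.
Proof.
move=> T wP; apply/subsetP => v vu; rewrite in_setU1 orbC.
have [//|vNc] /= := boolP (v \in childT s F u).
have /card_le1_eqP nonchild_eq := card_nonchild_le1 u T.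
by apply/eqP/nonchild_eq; rewrite // inE vNc.
Qed.

Lemma dplus_sub_nlT E N F : is_tree E N F -> dplus N F \subset nlT s N F.
Proof.
move=> T; apply/subsetP => u; rewrite !inE => /andP[-> deg_u] /=.
apply: contraTneq deg_u => noChild; rewrite -leqNgt.
by have := card_nonchild_le1 u T; rewrite noChild setD0.
Qed.

Lemma root_in_nlT E N F : is_tree E N F -> s \in N -> 2 <= #|N| -> s \in nlT s N F.
Proof.
move=> T sN N2; rewrite inE sN /=; have [v sv] := root_has_nb T sN N2.
apply/set0Pn; exists v; apply: (subsetP (root_nbT_sub_childT T)).
by rewrite inE.
Qed.

End Trees.

Section Hitting.
Variables (V : finType) (K : nat) (Gamma : V -> {set 'I_K}).
Implicit Types (X : {set 'I_K}) (S : {set V}).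

Lemma hitsS X S1 S2 : S1 \subset S2 -> hits Gamma X S2 -> hits Gamma X S1.
Proof.
move=> sS12 /forallP X2; apply/forallP => v; apply/implyP => vS1.
exact: implyP (X2 v) (subsetP sS12 v vS1).
Qed.

Lemma hits_setU1 X S w c : c \in Gamma w -> hits Gamma X S ->
  hits Gamma (c |: X) (w |: S).
Proof.
move=> cw /forallP XS; apply/forallP => v; apply/implyP.
case/setU1P=> [->|vS]; apply/set0Pn; first by exists c; rewrite !inE eqxx.
have /set0Pn[d] := implyP (XS v) vS.
by rewrite inE => /andP[dX dv]; exists d; rewrite !inE dX dv orbT.
Qed.

(* [arg min] in [min_hit] is only meaningful because [setT] is a hitting set
   as soon as any set is. *)
Lemma min_hit_le X S : hits Gamma X S -> min_hit Gamma S <= #|X|.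
Proof.
move=> XS; rewrite /min_hit; case: arg_minnP => [|B _]; last exact.
apply: hitsS (subxx S) _; apply/forallP => v; apply/implyP => vS.
have /set0Pn[c] := implyP (forallP XS v) vS.
by rewrite inE => /andP[_ cv]; apply/set0Pn; exists c; rewrite setTI.
Qed.

Lemma min_hit_nbT_le (E : rel V) N F s u X : is_tree E N F ->
  (forall v, Gamma v != set0) -> hits Gamma X (childT s F u) ->
  min_hit Gamma (nbT F u) <= #|X| + (u != s).
Proof.
move=> T Gamma0 Xc; have [us|us] := eqVneq u s.
  subst u; rewrite addn0; apply: min_hit_le (hitsS (root_nbT_sub_childT s T) Xc).
case: (pickP (mem (nbT F u :\: childT s F u))) => [w wP|noParent].
  have /set0Pn[c cw] := Gamma0 w.
  apply: leq_trans (min_hit_le (hitsS (nonchild_sub T wP) (hits_setU1 cw Xc))) _.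
  by rewrite cardsU1 addnC leq_add2l leq_b1.
apply: leq_trans (leq_addr _ _); apply/min_hit_le/(hitsS _ Xc).
by apply/subsetP => v vu; apply: contraT => vNc; rewrite -(noParent v) /= in_setD vNc.
Qed.

Lemma hits_card_gt0 X S : S != set0 -> hits Gamma X S -> 0 < #|X|.
Proof.
case/set0Pn=> v vS /forallP/(_ v); rewrite vS => /set0Pn[c].
by rewrite inE card_gt0 => /andP[cX _]; apply/set0Pn; exists c.
Qed.

End Hitting.

Lemma sum_nonroot_lt (T : finType) (D : {set T}) (s : T) (b : T -> nat) :
  0 < b s -> \sum_(u in D) (b u + (u != s)) < \sum_(u in s |: D) b u + #|D|.
Proof.
move=> bs; rewrite big_split /= -big_mkcondr /= sum1dep_card.
have -> : [set u in D | u != s] = D :\ s by apply/setP => u; rewrite !inE andbC.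
have [sD|sD] := boolP (s \in D).
  by rewrite (setUidPr _) ?sub1set // [X in _ < _ + X](cardsD1 s) sD add1n addnS.
rewrite big_setU1 //= [X in _ < _ + X](cardsD1 s) (negbTE sD) add0n.
by rewrite ltn_add2r -[X in X < _]add0n ltn_add2r.
Qed.

Theorem lemma6 (R : realFieldType) (V : finType) (E : rel V)
  (K : nat) (Gamma : V -> {set 'I_K}) (M : {set V}) (s : V) (es er : R)
  (Nopt : {set V}) (Fopt : {set {set V}}) (Bopt : V -> {set 'I_K})
  (NI : {set V}) (FI : {set {set V}}) :
  simple_graph E -> graph_connected E -> (2 <= #|V|)%N ->
  (0 < K)%N -> (forall u, Gamma u != set0) ->
  s \in M -> (0 <= er)%R -> (er <= es)%R ->
  (2 <= #|M|)%N ->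
  (* (Topt, Bopt) is an optimal solution of MEMTCS *)
  is_tree E Nopt Fopt -> M \subset Nopt -> feasible Gamma s Nopt Fopt Bopt ->
  (forall N F B, is_tree E N F -> M \subset N -> feasible Gamma s N F B ->
     (cost es er s Nopt Fopt Bopt <= cost es er s N F B)%R) ->
  (* T_I is a minimum isotropic scattering tree for M *)
  is_tree E NI FI -> M \subset NI ->
  (forall N F, is_tree E N F -> M \subset N -> (Xi Gamma NI FI <= Xi Gamma N F)%N) ->
  ((\sum_(u in nlT s Nopt Fopt) #|Bopt u|)%N%:Z >=
     (Xi Gamma NI FI)%:Z - (#|dplus Nopt Fopt|)%:Z + 1)%R.
Proof.
move=> _ _ _ _ Gamma0 sM _ _ M2 Topt MNopt Bopt_feas _ _ _ TI_min.
set D := dplus Nopt Fopt; set L := nlT s Nopt Fopt.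
have sNopt : s \in Nopt by apply: subsetP sM.
have Nopt2 : (2 <= #|Nopt|)%N by apply: leq_trans M2 (subset_leq_card MNopt).
have sL : s \in L := root_in_nlT Topt sNopt Nopt2.
have Bopt_s : (0 < #|Bopt s|)%N.
  by apply: hits_card_gt0 (Bopt_feas s sL); move: sL; rewrite inE => /andP[].
have DL : s |: D \subset L by rewrite subUset sub1set sL (dplus_sub_nlT s Topt).
have Xi_opt_le : (Xi Gamma Nopt Fopt <= \sum_(u in D) (#|Bopt u| + (u != s)))%N.
  apply: leq_sum => u uD; apply: min_hit_nbT_le Topt Gamma0 (Bopt_feas u _).
  by apply/(subsetP DL); rewrite in_setU1 uD orbT.
have sum_DL : (\sum_(u in s |: D) #|Bopt u| <= \sum_(u in L) #|Bopt u|)%N.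
  exact: (sub_le_big leqnn (fun m n => leq_addr n m) _ (subsetP DL)).
have Xi_opt : (Xi Gamma Nopt Fopt < \sum_(u in L) #|Bopt u| + #|D|)%N.
  apply: leq_ltn_trans Xi_opt_le (leq_trans (sum_nonroot_lt D Bopt_s) _).
  by rewrite leq_add2r.
have := leq_ltn_trans (TI_min _ _ Topt MNopt) Xi_opt.
by rewrite addrAC lerBlDr -[1%R]/(Posz 1) -!PoszD lez_nat addn1.
Qed.
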